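(* Let $N_r, N_t, L, m$ be positive integers with $L \le \min\{N_r, N_t\}$ and $L \le m \le N_t$. Let $h_1,\dots,h_L \in \mathbb{C}$ be path gains and let $\theta_{r,1},\dots,\theta_{r,L}$ and $\theta_{t,1},\dots,\theta_{t,L}$ be angles in $[-\pi/2,\pi/2)$. Define the channel matrix $$\mathbf{H} = \sqrt{\tfrac{N_r N_t}{L}}\sum_{l=1}^{L} h_l\, \mathbf{a}_r(\theta_{r,l})\, \mathbf{a}_t(\theta_{t,l})^H = \mathbf{A}_r \operatorname{diag}(\mathbf{h})\mathbf{A}_t^H \cdot \sqrt{\tfrac{N_rN_t}{L}},$$ where $\mathbf{a}_r(\theta) = \frac{1}{\sqrt{N_r}}[1, e^{-j\pi\sin\theta}, \dots, e^{-j\pi (N_r-1)\sin\theta}]^T \in \mathbb{C}^{N_r}$ and $\mathbf{a}_t(\theta) = \frac{1}{\sqrt{N_t}}[1, e^{-j\pi\sin\theta}, \dots, e^{-j\pi (N_t-1)\sin\theta}]^T\in\mathbb{C}^{N_t}$. Let $\mathbf{S} = \begin{bmatrix}\mathbf{I}_m \\ \mathbf{0}_{(N_t-m)\times m}\end{bmatrix} \in \mathbb{R}^{N_t\times m}$ and $\mathbf{H}_S = \mathbf{H}\mathbf{S}$, i.e. $\mathbf{H}_S$ consists of the first $m$ columns of $\mathbf{H}$. If the angles $\theta_{t,1},\dots,\theta_{t,L}$ are pairwise distinct and the angles $\theta_{r,1},\dots,\theta_{r,L}$ are pairwise distinct, then the column spaces of $\mathbf{H}_S$ and $\mathbf{H}$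 coincide: $\operatorname{col}(\mathbf{H}_S) = \operatorname{col}(\mathbf{H})$.
   Context: $\operatorname{col}(\mathbf{X})$ denotes the subspace spanned by the columns of $\mathbf{X}$; $j=\sqrt{-1}$; $(\cdot)^H$ is conjugate transpose. The array response vectors correspond to uniform linear arrays with half-wavelength antenna spacing. *)

From mathcomp Require Import all_boot all_order all_algebra.
From mathcomp Require Import complex.
From mathcomp Require Import all_classical all_reals all_analysis.
Set Implicit Arguments. Unset Strict Implicit. Unset Printing Implicit Defensive.
Import Order.TTheory GRing.Theory Num.Theory ComplexField.
Local Open Scope ring_scope.
Local Open Scope complex_scope.

Definition expj {R : realType} (x : R) : R[i] := (cos x) +i* (sin x).

Definition cr {R : realType} (x : R) : R[i] := x%:C.

(* ULA array response vector with half-wavelength spacing, length N: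
   a(theta) = 1/sqrt(N) [1, e^{-j pi sin theta}, ..., e^{-j pi (N-1) sin theta}]^T *)
Definition ula {R : realType} (N : nat) (theta : R) : 'cV[R[i]]_N :=
  \col_(k < N) (cr (1 / Num.sqrt (N%:R)) * expj (- (pi * (k%:R) * sin theta))).

Definition adjmx {R : realType} (p q : nat) (X : 'M[R[i]]_(p, q)) : 'M[R[i]]_(q, p) :=
  map_mx conjc (X^T).

Definition channel {R : realType} (Nr Nt L : nat) (h : 'I_L -> R[i])
  (thr tht : 'I_L -> R) : 'M[R[i]]_(Nr, Nt) :=
  cr (Num.sqrt ((Nr * Nt)%:R / L%:R)) *:
    \sum_(l < L) (h l *: (ula Nr (thr l) *m adjmx (ula Nt (tht l)))).

Definition selmx {R : realType} (Nt m : nat) : 'M[R[i]]_(Nt, m) :=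
  \matrix_(i < Nt, j < m) ((i : nat) == j)%:R.

Definition colspace_eq {F : fieldType} (p q1 q2 : nat)
  (X : 'M[F]_(p, q1)) (Y : 'M[F]_(p, q2)) : Prop := (X^T :=: Y^T)%MS.

From mathcomp Require Import all_boot all_order all_algebra.
From mathcomp Require Import complex.
From mathcomp Require Import all_classical all_reals all_analysis.
From mathcomp Require Import ring lra.
Import Order.TTheory GRing.Theory Num.Theory ComplexField.
Local Open Scope ring_scope.
Local Open Scope complex_scope.
Set Implicit Arguments. Unset Strict Implicit.

(* Entrywise, the conjugated transmit response a_t(theta)^* is
   (1/sqrt Nt) [1, w, ..., w^(Nt-1)] with w = e^{j pi sin theta}, so H^T = V G
   with V the Nt x L Vandermonde matrix on the nodes w_l and G an L x Nr matrix,
   while (H S)^T = S^T V G keeps the first m rows of V.  Since sin is injective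
   on [-pi/2, pi/2) with values in [-1, 1), and e^{j x} is injective on
   [-pi, pi), distinct angles give distinct nodes; as L <= m <= Nt, both
   Vandermonde matrices then have full column rank L, so both row spaces equal
   the row space of G. *)

Section Expj.
Variable R : realType.
Implicit Types a b x y : R.

Lemma expj0 : expj 0 = 1 :> R[i].
Proof. by rewrite /expj cos0 sin0. Qed.

Lemma expjD a b : expj (a + b) = expj a * expj b.
Proof. by rewrite /expj sinD cosD; simpc; congr (_ +i* _); ring. Qed.

Lemma expjM_natl a k : expj (k%:R * a) = expj a ^+ k.
Proof.
elim: k => [|k IHk]; first by rewrite mul0r expj0.
by rewrite exprSr -IHk -expjD -natr1 mulrDl mul1r.
Qed.

Lemma sin_eq0_itv x : - pi < x < pi -> sin x = 0 -> x = 0.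
Proof.
move=> /andP[xgt xlt] sx0; case: (ltgtP x 0) => // [xneg|xpos].
- have : 0 < sin (- x) by apply: sin_gt0_pi; apply/andP; split; lra.
  by rewrite sinN sx0 oppr0 ltxx.
- have : 0 < sin x by apply: sin_gt0_pi; apply/andP; split; lra.
  by rewrite sx0 ltxx.
Qed.

Lemma expj_inj x y : - pi <= x < pi -> - pi <= y < pi -> expj x = expj y -> x = y.
Proof.
move=> /andP[x_ge x_lt] /andP[y_ge y_lt] exy.
pose t := (x - y) / 2.
have sq1 : expj t ^+ 2 = 1.
  rewrite -expjM_natl (_ : 2%:R * t = x + - y); last by rewrite /t; field.
  by rewrite expjD exy -expjD subrr expj0.
(* the real part of e^{2jt} = 1 reads cos^2 t - sin^2 t = 1 *)
have sin0 : sin t = 0.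
  move: sq1; rewrite /expj expr2; simpc => -[cos2B _].
  have /eqP : sin t ^+ 2 = 0 by have := cos2Dsin2 t; rewrite !expr2; lra.
  by rewrite sqrf_eq0 => /eqP.
have /eqP : t = 0 by apply: sin_eq0_itv => //; rewrite /t; apply/andP; split; lra.
by rewrite mulf_eq0 invr_eq0 pnatr_eq0 orbF subr_eq0 => /eqP.
Qed.

Lemma sin_lt1 x : - (pi / 2) <= x < pi / 2 -> sin x < 1.
Proof.
move=> /andP[x_ge x_lt]; have pi2_gt0 : 0 < pi / 2 :> R by rewrite divr_gt0 ?pi_gt0.
by rewrite -sin_pihalf ltr_sin // !in_itv /= ?x_ge ?(ltW x_lt) //; lra.
Qed.

End Expj.

Definition ula_node {R : realType} (theta : R) : R[i] := expj (pi * sin theta).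

Lemma ula_node_inj (R : realType) (a b : R) :
  - (pi / 2) <= a < pi / 2 -> - (pi / 2) <= b < pi / 2 ->
  ula_node a = ula_node b -> a = b.
Proof.
move=> a_itv b_itv; have pi_gt0 := @pi_gt0 R.
have node_itv (c : R) : - (pi / 2) <= c < pi / 2 -> - pi <= pi * sin c < pi.
  move=> c_itv; have := sin_lt1 c_itv; have := sin_geN1 c.
  by move=> ? ?; apply/andP; split; nra.
move=> /(expj_inj (node_itv a a_itv) (node_itv b b_itv)) /(mulfI (lt0r_neq0 pi_gt0)).
have [/andP[a_ge /ltW a_le] /andP[b_ge /ltW b_le]] := (a_itv, b_itv).
by apply: sin_inj; rewrite in_itv /= ?a_ge ?b_ge.
Qed.

Lemma adjmx_ula (R : realType) (N : nat) (theta : R) (k : 'I_N) :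
  adjmx (ula N theta) 0 k = cr (1 / Num.sqrt N%:R) * ula_node theta ^+ k.
Proof.
by rewrite !mxE /ula_node -expjM_natl mulrCA mulrA /cr /expj sinN cosN; simpc.
Qed.

Definition gain_mx {R : realType} (Nr Nt L : nat) (h : 'I_L -> R[i])
    (thr : 'I_L -> R) : 'M[R[i]]_(L, Nr) :=
  \matrix_(l, i) (cr (Num.sqrt ((Nr * Nt)%:R / L%:R)) * cr (1 / Num.sqrt Nt%:R)
                  * h l * ula Nr (thr l) i 0).

Lemma trmx_channel (R : realType) (Nr Nt L : nat) (h : 'I_L -> R[i])
    (thr tht : 'I_L -> R) :
  (channel Nr Nt h thr tht)^T
    = Vandermonde Nt (\row_l ula_node (tht l)) *m gain_mx Nr Nt h thr.
Proof.
apply/matrixP => k i; rewrite !mxE summxE mulr_sumr; apply: eq_bigr => l _.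
by rewrite [in LHS]mxE mxE big_ord1 adjmx_ula !mxE; ring.
Qed.

Lemma trmx_selmx_mul (R : realType) (Nt m n : nat) (le_m_Nt : (m <= Nt)%N)
    (A : 'M[R[i]]_(Nt, n)) :
  (selmx Nt m)^T *m A = rowsub (widen_ord le_m_Nt) A.
Proof.
apply/matrixP => j l; rewrite !mxE (bigD1 (widen_ord le_m_Nt j)) //= big1.
  by rewrite !mxE eqxx mul1r addr0.
move=> i /negbTE i_neq; rewrite !mxE.
suff /negbTE -> : (i : nat) != j by rewrite mul0r.
by apply: contraFN i_neq => /eqP ij; apply/eqP/val_inj.
Qed.

Lemma rowsub_Vandermonde (R : pzRingType) (m n k : nat) (le_k_m : (k <= m)%N)
    (a : 'rV[R]_n) :
  rowsub (widen_ord le_k_m) (Vandermonde m a) = Vandermonde k a.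
Proof. by apply/matrixP => i j; rewrite !mxE. Qed.

Lemma row_full_Vandermonde (F : fieldType) (m n : nat) (a : 'rV[F]_n) :
  (n <= m)%N -> injective (a 0) -> row_full (Vandermonde m a).
Proof.
move=> le_n_m a_inj; rewrite -sub1mx.
apply: submx_trans (rowsub_sub (widen_ord le_n_m) _).
rewrite rowsub_Vandermonde sub1mx row_full_unit unitmxE unitfE det_Vandermonde.
apply/prodf_neq0 => i _; apply/prodf_neq0 => j lt_ij; rewrite subr_eq0.
by apply: contraTneq lt_ij => /a_inj ->; rewrite ltnn.
Qed.

Theorem lemma1 (R : realType) (Nr Nt L m : nat)
  (h : 'I_L -> R[i]) (thr tht : 'I_L -> R) :
  (0 < Nr)%N -> (0 < Nt)%N -> (0 < L)%N -> (0 < m)%N ->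
  (L <= minn Nr Nt)%N -> (L <= m)%N -> (m <= Nt)%N ->
  (forall l, - (pi / 2) <= thr l < pi / 2) ->
  (forall l, - (pi / 2) <= tht l < pi / 2) ->
  injective tht -> injective thr ->
  colspace_eq (channel Nr Nt h thr tht *m selmx Nt m) (channel Nr Nt h thr tht).
Proof.
(* Only the transmit side matters: the receive angles merely enter the factor G. *)
move=> _ _ _ _ _ le_L_m le_m_Nt _ tht_itv tht_inj _.
set w : 'rV_L := \row_l ula_node (tht l).
have w_inj : injective (w 0).
  by move=> l l'; rewrite !mxE => /(ula_node_inj (tht_itv l) (tht_itv l')) /tht_inj.
rewrite /colspace_eq trmx_mul trmx_channel mulmxA trmx_selmx_mul rowsub_Vandermonde.
have full_m := row_full_Vandermonde le_L_m w_inj.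
have full_Nt := row_full_Vandermonde (leq_trans le_L_m le_m_Nt) w_inj.
exact: eqmx_trans (eqmxMfull _ full_m) (eqmx_sym (eqmxMfull _ full_Nt)).
Qed.
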